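(* Let $(\Omega,\mathcal F,\mathbb P)$ and $u:\Omega\times\mathbb R\to\mathbb R$ satisfy: (i) for every $\omega$, $u(\omega,\cdot)$ is right continuous with left limits, nondecreasing, and $u(\omega,0)=0$; (ii) $u(\cdot,x)\in\mathcal L^1(\Omega,\mathcal F,\mathbb P)$ for every $x$; (iii) $T_u(f):=\int_\Omega u(\omega,f(\omega))\,\mathbb P(d\omega)$ is continuous from below on $\mathcal L^\infty(\Omega,\mathcal F)$ (i.e. $T_u(f_n)\to T_u(f)$ whenever $f_n(\omega)\uparrow f(\omega)$ for every $\omega$, all bounded measurable). Then there exists $\widehat u:\Omega\times\mathbb R\to\mathbb R$ with $\widehat u(\omega,\cdot)$ nondecreasing and continuous for every $\omega$, such that $E:=\{\omega: u(\omega,x)=\widehat u(\omega,x)\ \forall x\in\mathbb R\}\in\mathcal F$, $\mathbb P(E)=1$, and $T_u(f)=T_{\widehat u}(f)$ for every $f\in\mathcal L^\infty(\Omega,\mathcal F)$. Moreover, if $u(\omega,\cdot)$ is strictly increasing for every $\omega$, then $\widehat u(\omega,\cdot)$ can be taken strictly increasing for every $\omega$.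
   Context: $\mathcal L^\infty(\Omega,\mathcal F)$: bounded $\mathcal F$-measurable real functions; $T_{\widehat u}$ is defined analogously to $T_u$. *)

From HB Require Import structures.
From mathcomp Require Import all_boot all_order all_algebra.
From mathcomp Require Import all_classical all_reals all_analysis.
Set Implicit Arguments. Unset Strict Implicit. Unset Printing Implicit Defensive.
Import Order.TTheory GRing.Theory Num.Theory.
Import numFieldNormedType.Exports.
Local Open Scope classical_set_scope.
Local Open Scope ring_scope.

Definition Linfty (d : measure_display) (T : measurableType d) (R : realType)
  (f : T -> R) : Prop :=
  measurable_fun setT f /\ exists M : R, forall w, `|f w| <= M.

Definition Tu (d : measure_display) (T : measurableType d) (R : realType)
  (P : probability T R) (u : T -> R -> R) (f : T -> R) : \bar R :=
  (\int[P]_(w in setT) (u w (f w))%:E)%E.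

Definition cont_from_below (d : measure_display) (T : measurableType d)
  (R : realType) (P : probability T R) (u : T -> R -> R) : Prop :=
  forall (fs : nat -> T -> R) (f : T -> R),
    (forall n, Linfty (fs n)) -> Linfty f ->
    (forall w, nondecreasing_seq (fun n => fs n w)) ->
    (forall w, (fun n => fs n w) @ \oo --> f w) ->
    Tu P u (fs n) @[n --> \oo] --> Tu P u f.

From HB Require Import structures.
From mathcomp Require Import all_boot all_order all_algebra.
From mathcomp Require Import all_classical all_reals all_analysis.
From mathcomp Require Import lra measurable_realfun.

Import Order.TTheory GRing.Theory Num.Theory.
Import numFieldNormedType.Exports.
Local Open Scope classical_set_scope.
Local Open Scope ring_scope.

(* Continuity from below, applied to [g - 1/(n+1)] increasing to a bounded
   measurable [g], shows that almost surely [u w] has no left jump at [g w].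
   Every jump of [u w] sits at the first point of [[-N, N]] where [u w] reaches
   some rational level; this point depends measurably and boundedly on [w], so
   countably many such [g] catch all jumps, and off the resulting null set
   [u w] is continuous. There [u] is kept; on the null set it is replaced by a
   strictly increasing affine function. *)

(* Truncated first-passage point: the first [x >= -N] at which [h] reaches
   the level [t], or [N] if there is none below [N]. *)
Definition crossing_set {R : realType} (h : R -> R) (t N : R) : set R :=
  [set x | - N <= x /\ (t <= h x \/ N <= x)].
Definition crossing {R : realType} (h : R -> R) (t N : R) : R :=
  inf (crossing_set h t N).

Section nondecreasing_right_continuous.
Context {R : realType} {h : R -> R}.
Hypothesis h_nd : {homo h : x y / x <= y}.
Hypothesis h_rc : right_continuous h.

Lemma right_continuous_lt x c : h x < c -> exists2 z, x < z & h z < c.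
Proof.
move=> hxc; have /cvgr_lt /(_ c hxc) hnear := h_rc x.
near (x^'+) => z; exists z; near: z; [exact: nbhs_right_gt | exact: hnear].
Unshelve. all: by end_near.
Qed.

Lemma continuous_no_left_jump :
  (forall x c, c < h x -> exists2 y, y < x & c < h y) -> continuous h.
Proof.
move=> nojump x; apply/cvgrPdist_lt => e e0.
have [z xz hz] : exists2 z, x < z & h z < h x + e.
  by apply: right_continuous_lt; rewrite ltrDl.
have [y yx hy] : exists2 y, y < x & h x - e < h y.
  by apply: nojump; rewrite ltrBlDr ltrDl.
near=> s.
have ys : y < s by near: s; exact: lt_nbhsr yx.
have sz : s < z by near: s; exact: lt_nbhsl xz.
have := h_nd _ _ (ltW ys); have := h_nd _ _ (ltW sz).
rewrite ltr_distlC; move=> *; apply/andP; split; lra.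
Unshelve. all: by end_near.
Qed.

Variables (t N : R).
Hypothesis N_ge0 : 0 <= N.

Let N_crossing : crossing_set h t N N.
Proof. by split; [rewrite (le_trans _ N_ge0) // oppr_le0 | right]. Qed.

Lemma crossing_le x : crossing_set h t N x -> crossing h t N <= x.
Proof. by apply: ge_inf; exists (- N) => y []. Qed.

Lemma crossing_ge : - N <= crossing h t N.
Proof. by apply: lb_le_inf; [exists N | move=> y []]. Qed.

Lemma norm_crossing_le : `|crossing h t N| <= N.
Proof. by rewrite ler_norml crossing_ge crossing_le. Qed.

Lemma crossing_setE : crossing_set h t N = [set x | crossing h t N <= x].
Proof.
have crossing_mem : crossing_set h t N (crossing h t N).
  split; first exact: crossing_ge.
  have [|cN] := leP N (crossing h t N); first by right.
  left; rewrite leNgt; apply/negP => /right_continuous_lt[z cz hz].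
  have czN : crossing h t N < Order.min z N by rewrite lt_min cz cN.
  have [y [_ tyNy]] := inf_lt (ex_intro _ N N_crossing) czN.
  rewrite lt_min => /andP[yz yN]; case: tyNy => [ty|Ny].
  - by have := le_lt_trans (le_trans ty (h_nd _ _ (ltW yz))) hz; rewrite ltxx.
  - by have := le_lt_trans Ny yN; rewrite ltxx.
rewrite predeqE => x; split; first exact: crossing_le.
move=> /= cx; have [Nc tc_or_Nc] := crossing_mem.
split; first exact: le_trans Nc cx.
case: tc_or_Nc => [tc|Nc']; first by left; exact: le_trans tc (h_nd _ _ cx).
by right; exact: le_trans Nc' cx.
Qed.

Lemma crossing_at_jump x : - N <= x < N -> (forall y, y < x -> h y < t) ->
  t <= h x -> crossing h t N = x.
Proof.
move=> /andP[Nx xN] below tx.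
apply/eqP; rewrite eq_le crossing_le /=; last first.
  by split => //; left.
rewrite leNgt; apply/negP => cx.
have : crossing_set h t N (crossing h t N) by rewrite crossing_setE /=.
case=> _ [/(lt_le_trans (below _ cx))|]; first by rewrite ltxx.
by move=> /le_lt_trans/(_ (lt_trans cx xN)); rewrite ltxx.
Qed.

End nondecreasing_right_continuous.

Section measurable_sections.
Context {d} {T : measurableType d} {R : realType} {u : T -> R -> R}.
Hypothesis u_rc : forall w, right_continuous (u w).
Hypothesis u_nd : forall w, {homo u w : x y / x <= y}.
Hypothesis u_mx : forall x, measurable_fun setT (u ^~ x).

(* [u] is a Caratheodory-type function: by right continuity, [u w (y w) < c]
   is witnessed by a rational [q > y w] with [u w q < c]. *)
Lemma measurable_fun_comp_section (y : T -> R) :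
  measurable_fun setT y -> measurable_fun setT (fun w => u w (y w)).
Proof.
move=> my _; apply: (measurability _ (RGenInftyO.measurableE R)) => //.
move=> _ [_ [c ->] <-].
rewrite [X in measurable X](_ : _ = \bigcup_(q : rat)
  ([set w | y w < ratr q] `&` [set w | u w (ratr q) < c])).
  apply: bigcupT_measurable_rat => q; apply: measurableI.
  - rewrite -[X in measurable X]setTI -preimage_itvNyo.
    by apply: my => //; exact: measurable_itv.
  - rewrite -[X in measurable X]setTI -(@preimage_itvNyo _ _ _ (u ^~ (ratr q))).
    by apply: u_mx => //; exact: measurable_itv.
rewrite predeqE => w; split.
  move=> [_ /=]; rewrite in_itv /= => /(right_continuous_lt (u_rc w))[z yz uz].
  have [q] := rat_in_itvoo yz; rewrite in_itv /= => /andP[yq qz].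
  by exists q => //; split => //=; rewrite (le_lt_trans _ uz) // u_nd // ltW.
move=> [q _ [/= yq uq]]; split => //=; rewrite in_itv /=.
by rewrite (le_lt_trans _ uq) // u_nd // ltW.
Qed.

Lemma measurable_fun_crossing (t N : R) : 0 <= N ->
  measurable_fun setT (fun w => crossing (u w) t N).
Proof.
move=> N_ge0 _; apply: (measurability _ (RGenOInfty.measurableE R)) => //.
move=> _ [_ [c ->] <-]; rewrite setTI.
rewrite [X in measurable X](_ : _ = ~` [set w | crossing_set (u w) t N c]).
  apply: measurableC.
  have [Nc|Nc] := pselect (- N <= c); last first.
    by rewrite (_ : [set w | _] = set0) //; apply/seteqP; split => w // -[].
  have [Nc'|cN] := leP N c.
    rewrite (_ : [set w | _] = setT) //.
    by apply/seteqP; split => w // _; split => //; right.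
  rewrite (_ : [set w | _] = setT `&` (u ^~ c) @^-1` `[t, +oo[).
    by apply: u_mx => //; exact: measurable_itv.
  apply/seteqP; split => w /=; rewrite in_itv /= andbT.
    by case=> _ [//|Nc']; have := le_lt_trans Nc' cN; rewrite ltxx.
  by move=> [_ tu]; split => //; left.
apply/seteqP; split => w /=; rewrite in_itv /= andbT;
  by rewrite (crossing_setE (u_nd w) (u_rc w) _ _ N_ge0) /= ltNge => /negP.
Qed.

End measurable_sections.

Lemma measure_bigcup_null d (T : measurableType d) (R : realType)
    (mu : {measure set T -> \bar R}) (F : (set T)^nat) :
  (forall k, measurable (F k)) -> (forall k, mu (F k) = 0%E) ->
  mu (\bigcup_k F k) = 0%E.
Proof.
move=> mF F0; apply/eqP; rewrite eq_le measure_ge0 andbT.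
have := @measure_sigma_subadditive _ _ _ mu _ F mF
  (bigcupT_measurable F mF) (@subset_refl _ _).
by move/le_trans; apply; rewrite eseries0 // => k _ _; rewrite F0.
Qed.

Lemma measurable_fun_in_set d (T : measurableType d) (A : set T) :
  measurable A -> measurable_fun setT (fun w => w \in A).
Proof.
move=> mA; apply: (measurable_fun_bool true); rewrite setTI.
rewrite (_ : _ @^-1` _ = A) //; apply/seteqP; split => w /=.
- by move=> /set_mem.
- by move=> /mem_set.
Qed.

Section jumps.
Context {d} {T : measurableType d} {R : realType} (P : probability T R).
Variable u : T -> R -> R.
Hypothesis u_rc : forall w, right_continuous (u w).
Hypothesis u_nd : forall w, {homo u w : x y / x <= y}.
Hypothesis u_int : forall x, P.-integrable setT (fun w => (u w x)%:E).

Lemma measurable_fun_section x : measurable_fun setT (u ^~ x).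
Proof. by apply/measurable_EFinP; exact: measurable_int (u_int x). Qed.

Let measurable_comp :=
  measurable_fun_comp_section u_rc u_nd measurable_fun_section.

Lemma integrable_comp_section (y : T -> R) (M : R) :
  measurable_fun setT y -> (forall w, `|y w| <= M) ->
  P.-integrable setT (fun w => (u w (y w))%:E).
Proof.
move=> my yM; apply: (le_integrable measurableT _ _
  (integrableD measurableT (integrable_abse (u_int M))
                           (integrable_abse (u_int (- M))))) => /=.
  exact/measurable_EFinP/measurable_comp.
move=> w _; rewrite /= lee_fin.
have /andP[yl yu] : - M <= y w <= M by rewrite -ler_norml.
have := u_nd w _ _ yl; have := u_nd w _ _ yu.
have := ler_norm (u w M); have := ler_norm (- u w (- M)); rewrite normrN.
have := normr_ge0 (u w M); have := normr_ge0 (u w (- M)).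
move=> ? ? ? ? ? ?; rewrite [leRHS]ger0_norm ?addr_ge0 //.
by rewrite ler_norml; apply/andP; split; lra.
Qed.

Definition left_jump_ge (g : T -> R) (k : nat) : set T :=
  \bigcap_n [set w | k.+1%:R^-1 <= u w (g w) - u w (g w - n.+1%:R^-1)].

Definition left_jump (g : T -> R) : set T := \bigcup_k left_jump_ge g k.

Section bounded_level.
Variables (g : T -> R) (M : R).
Hypothesis g_m : measurable_fun setT g.
Hypothesis g_bd : forall w, `|g w| <= M.

Lemma measurable_left_jump_ge k : measurable (left_jump_ge g k).
Proof.
apply: bigcapT_measurable => n; rewrite -[X in measurable X]setTI.
rewrite -(@preimage_itvcy _ _ _ (fun w => u w (g w) - u w (g w - n.+1%:R^-1))).
apply: measurable_funB => //; first exact: measurable_comp.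
by apply: measurable_comp; apply: measurable_funB.
Qed.

Lemma measurable_left_jump : measurable (left_jump g).
Proof. exact: bigcupT_measurable measurable_left_jump_ge. Qed.

Let norm_left_shift_le (n : nat) w : `|g w - n.+1%:R^-1| <= M + 1.
Proof.
rewrite (le_trans (ler_normB _ _)) // lerD //.
by rewrite normfV ger0_norm // invf_le1 // ler1n.
Qed.

Hypothesis u_cfb : cont_from_below P u.

Lemma Tu_left_shift_cvg :
  Tu P u (fun w => g w - n.+1%:R^-1) @[n --> \oo] --> Tu P u g.
Proof.
apply: u_cfb; last 3 first.
- by split => //; exists M.
- move=> w m n mn; rewrite lerD2l lerN2 lef_pV2 ?posrE ?ltr0n // ler_nat.
  by rewrite ltnS.
- move=> w; rewrite -[X in _ --> X]subr0.
  by apply: cvgB; [exact: cvg_cst | exact: cvg_harmonic].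
by move=> n; split; [exact: measurable_funB | exists (M + 1)].
Qed.

Lemma left_jump_ge_mass_le k (n : nat) :
  ((k.+1%:R^-1)%:E * P (left_jump_ge g k) <=
    Tu P u g - Tu P u (fun w => g w - n.+1%:R^-1)%R)%E.
Proof.
have mA := measurable_left_jump_ge k.
have mgn : measurable_fun setT (fun w => g w - n.+1%:R^-1).
  exact: measurable_funB.
have mgap : measurable_fun setT
    (fun w => (u w (g w))%:E - (u w (g w - n.+1%:R^-1))%:E)%E.
  by apply/measurable_EFinP; apply: measurable_funB; exact: measurable_comp.
rewrite /Tu -integralB_EFin //; last 2 first.
- exact: integrable_comp_section g_bd.
- exact: integrable_comp_section mgn (norm_left_shift_le n).
rewrite -integral_cst //.
apply: (@le_trans _ _ (\int[P]_(w in left_jump_ge g k)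
    ((u w (g w))%:E - (u w (g w - n.+1%:R^-1))%:E))%E).
  apply: ge0_le_integral => //.
  - by move=> w _; rewrite lee_fin.
  - exact: measurable_funS mgap.
  - by move=> w Aw; rewrite -EFinB lee_fin; exact: (Aw n).
apply: ge0_subset_integral => // w _.
by rewrite -EFinB lee_fin subr_ge0 u_nd // gerBl.
Qed.

Lemma left_jump_ge_null k : P (left_jump_ge g k) = 0%E.
Proof.
have Tu_fin : Tu P u g \is a fin_num.
  rewrite /Tu; apply: integrable_fin_num => //.
  exact: integrable_comp_section g_m g_bd.
have gap_cvg : (Tu P u g - Tu P u (fun w => g w - n.+1%:R^-1)%R)%E
    @[n --> \oo] --> 0%E.
  rewrite -(subee Tu_fin); apply: cvgeB; last exact: Tu_left_shift_cvg.
  - by rewrite fin_num_adde_defl // fin_numN.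
  - exact: cvg_cst.
have : ((k.+1%:R^-1)%:E * P (left_jump_ge g k) <= 0)%E.
  rewrite -(cvg_lim _ gap_cvg) //; apply: lime_ge; first exact: cvgP gap_cvg.
  by apply: nearW => n; exact: left_jump_ge_mass_le.
rewrite pmule_rle0 ?lte_fin ?invr_gt0 // => A_le0.
by apply/eqP; rewrite eq_le A_le0 measure_ge0.
Qed.

Lemma left_jump_null : P (left_jump g) = 0%E.
Proof.
exact: measure_bigcup_null measurable_left_jump_ge left_jump_ge_null.
Qed.

End bounded_level.

Definition rat_level (n : nat) : R := ratr (odflt 0 (unpickle n : option rat)).

Definition discontinuity_set : set T :=
  \bigcup_n \bigcup_(N : nat)
    left_jump (fun w => crossing (u w) (rat_level n) N%:R).

Let measurable_crossing n (N : nat) :=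
  measurable_fun_crossing u_rc u_nd measurable_fun_section
    (rat_level n) N%:R (ler0n _ N).

Let norm_crossing (n N : nat) w :
    `|crossing (u w) (rat_level n) N%:R| <= N%:R :=
  norm_crossing_le (h := u w) (rat_level n) N%:R (ler0n _ N).

Lemma measurable_discontinuity_set : measurable discontinuity_set.
Proof.
apply: bigcupT_measurable => n; apply: bigcupT_measurable => N.
exact: measurable_left_jump _ (measurable_crossing n N).
Qed.

Lemma discontinuity_set_null : cont_from_below P u -> P discontinuity_set = 0%E.
Proof.
move=> u_cfb; apply: measure_bigcup_null => n.
  apply: bigcupT_measurable => N.
  exact: measurable_left_jump _ (measurable_crossing n N).
apply: measure_bigcup_null => N.
  exact: measurable_left_jump _ (measurable_crossing n N).
exact: left_jump_null _ _ (measurable_crossing n N) (norm_crossing n N) u_cfb.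
Qed.

Lemma discontinuity_setP w x c : c < u w x ->
  (forall y, y < x -> u w y <= c) -> discontinuity_set w.
Proof.
move=> cx below.
have [q] := rat_in_itvoo cx; rewrite in_itv /= => /andP[cq qx].
have := archi_boundP (normr_ge0 x); set K := Num.Def.archi_bound _.
rewrite ltr_norml => /andP[Kx xK].
exists (pickle q) => //; exists K => //.
have levelE : rat_level (pickle q) = ratr q by rewrite /rat_level pickleK.
have crossingE : crossing (u w) (rat_level (pickle q)) K%:R = x.
  rewrite levelE; apply: (crossing_at_jump (u_nd w) (u_rc w)) => //.
  - by rewrite (ltW Kx).
  - by move=> y /below /le_lt_trans; apply.
  - exact: ltW.
have gap_gt0 : 0 < u w x - c by rewrite subr_gt0.
have [k _ /(_ k (leqnn k)) k_lt] := near_infty_natSinv_lt (PosNum gap_gt0).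
exists k => // n _; rewrite /= crossingE.
have : u w (x - n.+1%:R^-1) <= c by apply: below; rewrite gtrDl oppr_lt0.
by move=> ?; apply: le_trans (ltW k_lt) _; rewrite lerD2l lerN2.
Qed.

Lemma continuous_off_discontinuity_set w :
  ~ discontinuity_set w -> continuous (u w).
Proof.
move=> no_jump; apply: continuous_no_left_jump (u_nd w) (u_rc w) _ => x c cx.
apply: contrapT => below; apply/no_jump/(discontinuity_setP w x c cx) => y yx.
by rewrite leNgt; apply/negP => cy; apply: below; exists y.
Qed.

(* On the null set of discontinuities, replace [u w] by a continuous strictly
   increasing function that differs from [u w] at [1]: then [u] and its
   version agree exactly off the discontinuity set. *)
Definition cont_version (w : T) (x : R) : R :=
  if w \in discontinuity_set then x + u w 1 + 1 else u w x.

Lemma cont_version_agreeE :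
  [set w | forall x, u w x = cont_version w x] = ~` discontinuity_set.
Proof.
apply/seteqP; split => w /=; last first.
  by move=> w_out x; rewrite /cont_version memNset.
by move=> /(_ 1) + w_in; rewrite /cont_version mem_set // => agree1; lra.
Qed.

Lemma cont_version_nd w : {homo cont_version w : x y / x <= y}.
Proof.
move=> x y xy; rewrite /cont_version; case: ifPn => _; last exact: u_nd.
by rewrite !lerD2r.
Qed.

Lemma cont_version_increasing w : {homo u w : x y / x < y} ->
  {homo cont_version w : x y / x < y}.
Proof.
move=> u_inc x y xy; rewrite /cont_version; case: ifPn => _; last exact: u_inc.
by rewrite !ltrD2r.
Qed.

Lemma continuous_cont_version w : continuous (cont_version w).
Proof.
have [w_in|w_out] := boolP (w \in discontinuity_set).
  rewrite (_ : cont_version w = fun x => x + u w 1 + 1); last first.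
    by apply/funext => x; rewrite /cont_version w_in.
  move=> x; apply: cvgD; last exact: cvg_cst.
  by apply: cvgD => //; exact: cvg_cst.
rewrite (_ : cont_version w = u w); last first.
  by apply/funext => x; rewrite /cont_version (negbTE w_out).
apply: continuous_off_discontinuity_set => w_in.
by rewrite (mem_set w_in) in w_out.
Qed.

Lemma Tu_cont_version : cont_from_below P u ->
  forall f, Linfty f -> Tu P u f = Tu P cont_version f.
Proof.
move=> u_cfb f [mf _]; apply: ae_eq_integral => //.
- exact/measurable_EFinP/measurable_comp.
- apply/measurable_EFinP; apply: measurable_fun_ifT.
  + exact/measurable_fun_in_set/measurable_discontinuity_set.
  + apply: measurable_funD => //; apply: measurable_funD => //.
    exact: measurable_fun_section.
  + exact: measurable_comp.
- exists discontinuity_set; split.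
  + exact: measurable_discontinuity_set.
  + exact: discontinuity_set_null.
  + move=> w /= agree; apply: contrapT => w_out; apply: agree => _.
    by rewrite /cont_version memNset.
Qed.

End jumps.

Theorem mainTheorem15 (d : measure_display) (T : measurableType d)
  (R : realType) (P : probability T R) (u : T -> R -> R) :
  (forall w,
     (forall x : R, u w @ x^'+ --> u w x) /\
     (forall x : R, cvg (u w @ x^'-)) /\
     {homo u w : x y / x <= y} /\
     u w 0 = 0) ->
  (forall x : R, P.-integrable setT (fun w => (u w x)%:E)) ->
  cont_from_below P u ->
  (exists uh : T -> R -> R,
     (forall w, {homo uh w : x y / x <= y} /\ continuous (uh w)) /\
     measurable [set w | forall x, u w x = uh w x] /\
     P [set w | forall x, u w x = uh w x] = 1%E /\
     (forall f : T -> R, Linfty f -> Tu P u f = Tu P uh f)) /\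
  ((forall w, {homo u w : x y / x < y}) ->
   exists uh : T -> R -> R,
     (forall w, {homo uh w : x y / x < y} /\ {homo uh w : x y / x <= y} /\
                continuous (uh w)) /\
     measurable [set w | forall x, u w x = uh w x] /\
     P [set w | forall x, u w x = uh w x] = 1%E /\
     (forall f : T -> R, Linfty f -> Tu P u f = Tu P uh f)).
Proof.
move=> u_props u_int u_cfb.
have u_rc w : right_continuous (u w) := (u_props w).1.
have u_nd w : {homo u w : x y / x <= y} := (u_props w).2.2.1.
have D_meas := measurable_discontinuity_set P u u_rc u_nd u_int.
have D_null := discontinuity_set_null P u u_rc u_nd u_int u_cfb.
have agree_meas : measurable [set w | forall x, u w x = cont_version u w x].
  by rewrite cont_version_agreeE; exact: measurableC.
have agree_full : P [set w | forall x, u w x = cont_version u w x] = 1%E.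
  by rewrite cont_version_agreeE probability_setC // D_null sube0.
have Tu_eq := Tu_cont_version P u u_rc u_nd u_int u_cfb.
split; [|move=> u_inc]; exists (cont_version u); do !split => //.
- exact: cont_version_nd.
- exact: continuous_cont_version.
- exact: cont_version_increasing.
- exact: cont_version_nd.
- exact: continuous_cont_version.
Qed.
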